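(* In the standard LLP setup, for every $N\ge1$: $L(G,\gamma^N_{optm})\supseteq L(G,\gamma^{N+1}_{optm})$.
   Context: Standard LLP setup. $\Sigma=\Sigma_c\,\dot\cup\,\Sigma_{uc}$ is a finite alphabet partitioned into controllable and uncontrollable events. The plant $G$ has generated language $L(G)\subseteq\Sigma^*$ and marked language $L_m(G)\subseteq L(G)$ with $L(G)=\overline{L_m(G)}$, where $\overline{M}$ denotes the set of all prefixes of strings in $M$. The legal language $K\subseteq L_m(G)$ satisfies $K=\overline{K}\cap L_m(G)$. For a prefix-closed language $L$, a language $M$ is controllable w.r.t. $L$ if $\overline{M}\Sigma_{uc}\cap L\subseteq\overline{M}$. For a language $L$ and $s\in\Sigma^*$: $L/s=\{t\in\Sigma^*: st\in L\}$; $L|_N=\{t\in L: |t|\le N\}$; $\Sigma_{L(G)}(s)=\{\sigma\in\Sigma: s\sigma\in L(G)\}$. For $M\subseteq\Sigma^*$, $M^{\uparrow/s|_N}$ denotes the supremal sublanguage of $M$ controllable w.r.t. $L(G)/s|_N$. The optimistic attitude gives $f^N_{optm}(s)=[K/s|_N\cup(\overline{K}/s|_N\setminus\overline{K}/s|_{N-1})]^{\uparrow/s|_N}$, and the LLP control policy is $\gamma^N_{optm}(s)=(\overline{f^N_{optm}(s)}\cap\Sigma)\cup(\Sigma_{uc}\cap\Sigma_{L(G)}(s))$. For a control policy $\gamma:\Sigma^*\to2^\Sigma$, $L(G,\gamma)$ is defined by $\epsilon\in L(G,\gamma)$ and $s\sigma\in L(G,\gamma)$ iff $s\in L(G,\gamma)$,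 $s\sigma\in L(G)$, $\sigma\in\gamma(s)$. *)

From mathcomp Require Import all_boot.
Set Implicit Arguments. Unset Strict Implicit. Unset Printing Implicit Defensive.

Section LLP.
Variable Sigma : finType.

Definition lang := seq Sigma -> Prop.

Definition pclos (M : lang) : lang := fun t => exists u, M (t ++ u).

Definition quot (L : lang) (s : seq Sigma) : lang := fun t => L (s ++ t).

Definition trunc (L : lang) (N : nat) : lang := fun t => L t /\ size t <= N.

Definition controllable (uc : pred Sigma) (L M : lang) : Prop :=
  forall t sigma, pclos M t -> uc sigma -> L (rcons t sigma) ->
    pclos M (rcons t sigma).

Definition supC (uc : pred Sigma) (L M : lang) : lang :=
  fun t => exists M' : lang,
    (forall u, M' u -> M u) /\ controllable uc L M' /\ M' t.

(* f^N_optm(s) = [K/s|_N \cup (\overline{K}/s|_N \ \overline{K}/s|_{N-1})]^{\uparrow/s|_N} *)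
Definition f_optm (uc : pred Sigma) (LG K : lang) (N : nat) (s : seq Sigma)
  : lang :=
  supC uc (trunc (quot LG s) N)
    (fun t => trunc (quot K s) N t \/
              (trunc (quot (pclos K) s) N t /\
               ~ trunc (quot (pclos K) s) (N - 1) t)).

Definition policy := seq Sigma -> Sigma -> Prop.

(* gamma^N_optm(s) = (\overline{f^N_optm(s)} \cap Sigma) \cup (Sigma_uc \cap Sigma_{L(G)}(s)) *)
Definition gamma_optm (uc : pred Sigma) (LG K : lang) (N : nat) : policy :=
  fun s sigma => pclos (f_optm uc LG K N s) [:: sigma] \/
                 (uc sigma /\ LG (rcons s sigma)).

Inductive closed_loop (LG : lang) (gamma : policy) : lang :=
| cl_nil : closed_loop LG gamma [::]
| cl_rcons : forall s sigma, closed_loop LG gamma s -> LG (rcons s sigma) ->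
    gamma s sigma -> closed_loop LG gamma (rcons s sigma).

End LLP.

From mathcomp Require Import all_boot.
From mathcomp Require Import zify.

(* The closed-loop language only grows when the control policy enables more
   events, so it suffices to show that every event enabled by gamma^{N+1}
   is enabled by gamma^N.  Uncontrollable events are treated identically by
   both policies; for the others we show more generally that every word of
   length <= N in the prefix closure of f^{N+1}(s) lies in the prefix closure
   of f^N(s).  The key construction is the cut [cut M N] of a language M at
   depth N: the prefixes of M of length <= N that are either in M or of length
   exactly N.  Its prefix closure is that of M truncated at N, the cut of a
   controllable language is controllable for the shorter horizon, and the cut
   of a sublanguage of the depth-(N+1) optimistic specification lies in the
   depth-N one, because its new words of length N are "pending" strings of
   K-bar. *)

Section Languages.
Variable Sigma : finType.
Implicit Types (L M K : lang Sigma) (s t u : seq Sigma).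

Lemma pclos_catl M t u : pclos M (t ++ u) -> pclos M t.
Proof. by move=> [v Hv]; exists (u ++ v); rewrite catA. Qed.

Definition cut M N : lang Sigma :=
  fun t => [/\ pclos M t, size t <= N & M t \/ size t = N].

Lemma pclos_cut M N t : pclos (cut M N) t <-> pclos M t /\ size t <= N.
Proof.
split.
  move=> [u [Htu Hsz _]]; split; first exact: pclos_catl Htu.
  by rewrite size_cat in Hsz; lia.
move=> [[u Hu] HtN].
have [HuN | HNu] := leqP (size (t ++ u)) N.
  exists u; split=> //; last by left.
  by exists [::]; rewrite cats0.
(* the continuation is too long: extend t only up to length N *)
exists (take (N - size t) u).
have Hsz : size (t ++ take (N - size t) u) = N.
  rewrite size_cat size_take; rewrite size_cat in HNu.
  by case: ltnP; lia.
split; [| by rewrite Hsz | by right].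
by exists (drop (N - size t) u); rewrite -catA cat_take_drop.
Qed.

Lemma controllable_cut uc L M N N' : N <= N' ->
  controllable uc (trunc L N') M -> controllable uc (trunc L N) (cut M N).
Proof.
move=> HNN' HM t a /pclos_cut [Ht HtN] Ha [HL Hsz].
apply/pclos_cut; split=> //.
by apply: HM => //; split=> //; lia.
Qed.

Lemma pclos_supC uc L M t :
  pclos (supC uc L M) t <->
  exists M', [/\ forall u, M' u -> M u, controllable uc L M' & pclos M' t].
Proof.
split.
  by move=> [u [M' [HM' [Hc Hu]]]]; exists M'; split=> //; exists u.
move=> [M' [HM' Hc [u Hu]]].
by exists u; exists M'.
Qed.

Definition optm_spec K s N : lang Sigma :=
  fun t => trunc (quot K s) N t \/
           (trunc (quot (pclos K) s) N t /\ ~ trunc (quot (pclos K) s) (N - 1) t).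

Lemma optm_spec_pclos K s N t : optm_spec K s N t -> pclos K (s ++ t).
Proof. by move=> [[Ht _] | [[Ht _] _]]; first by exists [::]; rewrite cats0. Qed.

(* Cutting a sublanguage of the depth-(N+1) specification at depth N >= 1
   yields a sublanguage of the depth-N specification: words kept from M have
   length <= N and so are legal or pending at depth N as well, and new words
   of length exactly N are pending strings of K-bar. *)
Lemma cut_optm_spec K s M N : 1 <= N ->
  (forall t, M t -> optm_spec K s N.+1 t) ->
  forall t, cut M N t -> optm_spec K s N t.
Proof.
move=> HN HM t [[u Hu] HtN [Mt | HtN']].
  case: (HM _ Mt) => [[Kt _] | [[Kbt _] Hpend]]; first by left.
  by exfalso; apply: Hpend; split; last rewrite subn1.
right; split; last by move=> [_]; lia.
split=> //.
by apply: (@pclos_catl K (s ++ t) u); rewrite -catA; exact: optm_spec_pclos (HM _ Hu).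
Qed.

Lemma pclos_f_optm_mono uc LG K N s t : 1 <= N -> size t <= N ->
  pclos (f_optm uc LG K N.+1 s) t -> pclos (f_optm uc LG K N s) t.
Proof.
move=> HN HtN /pclos_supC [M [HM Hc Ht]].
apply/pclos_supC; exists (cut M N); split.
- exact: cut_optm_spec HM.
- exact: controllable_cut Hc.
- exact/pclos_cut.
Qed.

Lemma gamma_optm_mono uc LG K N s a : 1 <= N ->
  gamma_optm uc LG K N.+1 s a -> gamma_optm uc LG K N s a.
Proof.
move=> HN [Ha | Ha]; last by right.
by left; apply: pclos_f_optm_mono.
Qed.

Lemma closed_loop_mono LG (gamma1 gamma2 : policy Sigma) :
  (forall s a, gamma1 s a -> gamma2 s a) ->
  forall s, closed_loop LG gamma1 s -> closed_loop LG gamma2 s.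
Proof.
move=> Hg s; elim=> [|t a _ IH HL Ha]; first exact: cl_nil.
by apply: cl_rcons => //; apply: Hg.
Qed.

End Languages.

Theorem theorem2 (Sigma : finType) (uc : pred Sigma) (LG Lm K : lang Sigma)
  (hLG : forall t, LG t <-> pclos Lm t)
  (hLm : forall t, Lm t -> LG t)
  (hKLm : forall t, K t -> Lm t)
  (hK : forall t, K t <-> (pclos K t /\ Lm t))
  (N : nat) (hN : 1 <= N) :
  forall s, closed_loop LG (gamma_optm uc LG K N.+1) s ->
            closed_loop LG (gamma_optm uc LG K N) s.
Proof.
apply: closed_loop_mono => s a.
exact: gamma_optm_mono.
Qed.
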